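(* Let $R$ be a commutative Noetherian ring with $1$ in which linear equations are solvable, let $>$ be a local degree ordering on $\operatorname{Mon}_n$, let $I$ be an ideal of $R[x_1,\ldots,x_n]$, and let $G$ be a standard basis (respectively a strong standard basis) of $I$ with respect to $>$. Then $G$ is a standard basis (respectively a strong standard basis) of $I\,R[[x_1,\ldots,x_n]]$.
   Context: Linear equations are solvable in $R$ means: for any $a,a_1,\ldots,a_m\in R$ there are algorithms to compute generators of $\{(b_1,\ldots,b_m)\in R^m:\sum a_ib_i=0\}$, to decide whether $a\in\langle a_1,\ldots,a_m\rangle$, and if so to compute $b_i$ with $a=\sum b_ia_i$. A monomial ordering is a total ordering $>$ on $\operatorname{Mon}_n=\{x^\alpha\}$ compatible with multiplication; it is local if $x^\alpha<1$ for all $\alpha\neq0$, and a local degree ordering if it is local and $x^\alpha>x^\beta$ implies $\deg x^\alpha\le\deg x^\beta$. For a nonzero polynomial or power series $f=\sum_{v\ge0}a_vx^{\alpha_v}$ with $a_v\neq0$ and $x^{\alpha_0}>x^{\alpha_1}>\cdots$, $LM(f)=x^{\alpha_0}$, $LC(f)=a_0$, $LT(f)=a_0x^{\alpha_0}$. $S_>=\{u\in R[x_1,\ldots,x_n]\setminus\{0\}:LT(u)=1\}$, $R[x_1,\ldots,x_n]_>=S_>^{-1}R[x_1,\ldots,x_n]$, which (for local $>$) is naturally contained in $R[[x_1,\ldots,x_n]]$; for $f\in R[x_1,\ldots,x_n]_>$, $LT(f):=LT(uf)$ for $u\in S_>$ with $uf$ a polynomial. For a set $G$, $L(G)$ is the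 ideal of $R[x_1,\ldots,x_n]$ generated by $\{LT(g):g\in G\}$. A standard basis of an ideal $I$ of $R[x_1,\ldots,x_n]$ means a standard basis of $I\,R[x_1,\ldots,x_n]_>$. For an ideal $J$ (of $R[x_1,\ldots,x_n]_>$ or of $R[[x_1,\ldots,x_n]]$), a finite set $G=\{g_1,\ldots,g_t\}$ is a standard basis of $J$ if $G\subseteq J$ and $L(G)=L(J)$, and a strong standard basis if $G\subseteq J$ and for every $f\in J\setminus\{0\}$ there is $i$ with $LT(g_i)$ dividing $LT(f)$ (i.e. $LT(f)=c\,x^\gamma LT(g_i)$ for some $c\in R$, $x^\gamma\in\operatorname{Mon}_n$). *)

From HB Require Import structures.
From mathcomp Require Import all_boot all_order all_algebra.
From mathcomp Require Import mpoly.
From Stdlib Require List.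
Set Implicit Arguments. Unset Strict Implicit. Unset Printing Implicit Defensive.
Import GRing.Theory.
Local Open Scope ring_scope.

Definition ideal_gen (T : comNzRingType) (S : T -> Prop) (x : T) : Prop :=
  exists s : seq (T * T), (forall y, y \in s -> S y.2) /\
    x = \sum_(y <- s) y.1 * y.2.

Definition is_ideal (T : comNzRingType) (I : T -> Prop) : Prop :=
  [/\ I 0, (forall x y, I x -> I y -> I (x + y)) & (forall r x, I x -> I (r * x))].

Definition noetherian (T : comNzRingType) : Prop :=
  forall I : T -> Prop, is_ideal I ->
    exists s : seq T, forall x, I x <-> ideal_gen (fun y => y \in s) x.

(* "Linear equations are solvable in R": algorithms (Rocq functions) that
   (1) compute generators of the syzygy module of a_1..a_m,
   (2) decide ideal membership a \in <a_1..a_m>,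
   (3) compute a representation a = sum b_i a_i when it exists. *)
Record lin_eq_solvable (R : comNzRingType) := LinEqSolvable {
  les_syz : forall m : nat, ('I_m -> R) -> {k : nat & 'I_k -> 'I_m -> R};
  les_syzP : forall m (a : 'I_m -> R),
     (forall j, \sum_i a i * projT2 (les_syz a) j i = 0) /\
     (forall b : 'I_m -> R, \sum_i a i * b i = 0 ->
        exists c : 'I_(projT1 (les_syz a)) -> R,
          forall i, b i = \sum_j c j * projT2 (les_syz a) j i);
  les_mem : R -> forall m : nat, ('I_m -> R) -> bool;
  les_memP : forall x m (a : 'I_m -> R),
     les_mem x a = true <-> exists b : 'I_m -> R, x = \sum_i b i * a i;
  les_coef : R -> forall m : nat, ('I_m -> R) -> ('I_m -> R);
  les_coefP : forall x m (a : 'I_m -> R),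
     les_mem x a = true -> x = \sum_i les_coef x a i * a i
}.

(* [lt a b] means x^a < x^b. *)
Definition monomial_ordering n (lt : rel 'X_{1..n}) : Prop :=
  [/\ (forall a, ~~ lt a a),
      (forall a b c, lt a b -> lt b c -> lt a c),
      (forall a b, a != b -> lt a b || lt b a) &
      (forall a b c, lt a b -> lt (a + c)%MM (b + c)%MM)].

Definition local_ordering n (lt : rel 'X_{1..n}) : Prop :=
  monomial_ordering lt /\ forall a : 'X_{1..n}, a != 0%MM -> lt a 0%MM.

Definition local_degree_ordering n (lt : rel 'X_{1..n}) : Prop :=
  local_ordering lt /\ forall a b, lt b a -> (mdeg a <= mdeg b)%N.

Definition series (R : comNzRingType) n := 'X_{1..n} -> R.

Definition ser_of_poly (R : comNzRingType) n (p : {mpoly R[n]}) : series R n :=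
  fun m => p@_m.

Definition ser_add (R : comNzRingType) n (f g : series R n) : series R n :=
  fun m => f m + g m.

Definition ser0 (R : comNzRingType) n : series R n := fun _ => 0.

Definition ser_mul (R : comNzRingType) n (f g : series R n) : series R n :=
  fun m => \sum_(p : 'X_{1..n < (mdeg m).+1} * 'X_{1..n < (mdeg m).+1}
                 | ((p.1 : 'X_{1..n}) + p.2)%MM == m)
             f p.1 * g p.2.

Definition ser_nz (R : comNzRingType) n (f : series R n) : Prop :=
  exists m, f m != 0.

Definition is_LT (R : comNzRingType) n (lt : rel 'X_{1..n}) (f : series R n)
    (c : R) (m : 'X_{1..n}) : Prop :=
  [/\ f m = c, c != 0 & forall m', f m' != 0 -> m' = m \/ lt m' m].

Definition L_of_seq (R : comNzRingType) n (lt : rel 'X_{1..n}) (G : seq (series R n))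
    : {mpoly R[n]} -> Prop :=
  ideal_gen (fun t : {mpoly R[n]} => exists g c m,
     [/\ List.In g G, is_LT lt g c m & t = c *: 'X_[m]]).

Definition L_of_set (R : comNzRingType) n (lt : rel 'X_{1..n}) (J : series R n -> Prop)
    : {mpoly R[n]} -> Prop :=
  ideal_gen (fun t : {mpoly R[n]} => exists f c m,
     [/\ J f, is_LT lt f c m & t = c *: 'X_[m]]).

Definition standard_basis (R : comNzRingType) n (lt : rel 'X_{1..n})
    (J : series R n -> Prop) (G : seq (series R n)) : Prop :=
  (forall g, List.In g G -> J g) /\
  (forall p, L_of_seq lt G p <-> L_of_set lt J p).

Definition strong_standard_basis (R : comNzRingType) n (lt : rel 'X_{1..n})
    (J : series R n -> Prop) (G : seq (series R n)) : Prop :=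
  (forall g, List.In g G -> J g) /\
  (forall f, J f -> ser_nz f -> exists g cf mf cg mg,
     [/\ List.In g G, is_LT lt f cf mf, is_LT lt g cg mg &
         exists (c : R) (gam : 'X_{1..n}), cf = c * cg /\ mf = (gam + mg)%MM]).

Definition in_S (R : comNzRingType) n (lt : rel 'X_{1..n}) (u : {mpoly R[n]}) : Prop :=
  is_LT lt (ser_of_poly u) 1 0%MM.

(* I R[x]_> = { f/u : f in I, u in S_> }, viewed inside R[[x]] (lt local):
   g = f/u  iff  u*g = f. *)
Definition loc_ideal (R : comNzRingType) n (lt : rel 'X_{1..n}) (I : {mpoly R[n]} -> Prop)
    (g : series R n) : Prop :=
  exists u f : {mpoly R[n]}, [/\ in_S lt u, I f &
     ser_mul (ser_of_poly u) g = ser_of_poly f].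

Definition ps_ideal (R : comNzRingType) n (I : {mpoly R[n]} -> Prop)
    (h : series R n) : Prop :=
  exists s : seq (series R n * {mpoly R[n]}), (forall y, List.In y s -> I y.2) /\
    h = foldr (fun y acc => ser_add (ser_mul y.1 (ser_of_poly y.2)) acc) (@ser0 R n) s.

(** A polynomial u with u(0) = 1 is a unit of R[[x]],
    with inverse the geometric series in 1 - u, so I R[x]_> is contained in
    I R[[x]].  Conversely, since > is a degree ordering, the leading term of a
    power series depends only on its coefficients up to the degree of its
    leading monomial, and every element of I R[[x]] agrees up to any given
    degree with an element of I; so both ideals have the same leading terms,
    and leading-term divisibility transfers as well. *)

From HB Require Import structures.
From mathcomp Require Import all_boot all_order all_algebra.
From mathcomp Require Import mpoly.
From Stdlib Require Import FunctionalExtensionality.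
From mathcomp Require Import zify.
Set Implicit Arguments. Unset Strict Implicit. Unset Printing Implicit Defensive.
Import GRing.Theory.
Local Open Scope ring_scope.

Lemma ideal_gen_sub (T : comNzRingType) (S S' : T -> Prop) x :
  (forall y, S y -> S' y) -> ideal_gen S x -> ideal_gen S' x.
Proof. by move=> SS' [s [sS ->]]; exists s; split=> // y /sS /SS'. Qed.

Section Truncation.
Variables (R : comNzRingType) (n : nat).
Implicit Types (p q w : {mpoly R[n]}) (f g : series R n).

Definition ser_agree d f p := forall m : 'X_{1..n}, (mdeg m <= d)%N -> f m = p@_m.

Lemma ser_agree_poly d p : ser_agree d (ser_of_poly p) p.
Proof. by []. Qed.

Lemma ser_mul_agree d f g p q :
  ser_agree d f p -> ser_agree d g q -> ser_agree d (ser_mul f g) (p * q).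
Proof.
move=> fp gq m hm; rewrite mcoeffM /ser_mul; apply: eq_big => [k|k _].
  by rewrite eq_sym.
have le_d (k' : 'X_{1..n < (mdeg m).+1}) : (mdeg k' <= d)%N.
  by apply: leq_trans hm; rewrite -ltnS bmdeg.
by rewrite fp ?gq ?le_d.
Qed.

Lemma mcoeffM_agree0 d p q (m : 'X_{1..n}) :
  ser_agree d (ser_of_poly p) 0 -> (mdeg m <= d)%N -> (p * q)@_m = 0.
Proof.
move=> p0 hm; rewrite -(ser_mul_agree (@ser_agree_poly d p) (@ser_agree_poly d q)) //.
by rewrite (ser_mul_agree p0 (@ser_agree_poly d q)) // mul0r mcoeff0.
Qed.

Definition ser_trunc d f : {mpoly R[n]} :=
  \sum_(k : 'X_{1..n < d.+1}) f k *: 'X_[k].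

Lemma ser_trunc_agree d f : ser_agree d f (ser_trunc d f).
Proof.
move=> m hm; rewrite /ser_trunc raddf_sum /=.
have hm' : (mdeg m < d.+1)%N by [].
rewrite (bigD1 (BMultinom hm')) //= mcoeffZ mcoeffX eqxx mulr1 big1 ?addr0 //.
move=> k hk; rewrite mcoeffZ mcoeffX; case: eqP => [e|]; last by rewrite mulr0.
by case/negP: hk; apply/eqP; apply: val_inj.
Qed.

Lemma mcoeff_expr_eq0 w k (m : 'X_{1..n}) :
  w@_0%MM = 0 -> (mdeg m < k)%N -> (w ^+ k)@_m = 0.
Proof.
move=> w0; elim: k m => [//|k IH] m hm.
rewrite exprS mcoeffM big1 // => kk /eqP e.
have [->|nz] := eqVneq (kk.1 : 'X_{1..n}) 0%MM; first by rewrite w0 mul0r.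
rewrite IH ?mulr0 //.
have : (0 < mdeg kk.1)%N by rewrite lt0n mdeg_eq0.
have := congr1 mdeg e; rewrite mdegD; move: hm.
move: (mdeg m) (mdeg kk.1) (mdeg kk.2) => a b c; lia.
Qed.

(* With w(0) = 0 this is the power series 1 / (1 - w): in degree d only the
   powers w^k with k <= d contribute. *)
Definition ser_geom w : series R n :=
  fun m => (\sum_(k < (mdeg m).+1) w ^+ k)@_m.

Section Geometric.
Variable w : {mpoly R[n]}.
Hypothesis w0 : w@_0%MM = 0.

Lemma ser_geom_agree d : ser_agree d (ser_geom w) (\sum_(k < d.+1) w ^+ k).
Proof.
elim: d => [|d IH] m; first by rewrite leqn0 => /eqP <-.
rewrite leq_eqVlt => /orP [/eqP <- //|hm].
by rewrite IH // [in RHS]big_ord_recr /= mcoeffD (mcoeff_expr_eq0 w0) ?addr0.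
Qed.

Lemma ser_geom_mulK f :
  ser_mul (ser_geom w) (ser_mul (ser_of_poly (1 - w)) f) = f.
Proof.
apply: functional_extensionality => m; set d := mdeg m.
have := ser_mul_agree (@ser_geom_agree d)
  (ser_mul_agree (@ser_agree_poly d (1 - w)) (@ser_trunc_agree d f)).
move=> /(_ m (leqnn d)) ->.
have geom : (\sum_(k < d.+1) w ^+ k) * (1 - w) = 1 - w ^+ d.+1.
  by rewrite mulrC -[1 - w]opprB mulNr -subrX1 opprB.
rewrite mulrA geom mulrBl mul1r mcoeffB -ser_trunc_agree //.
rewrite (@mcoeffM_agree0 d) ?subr0 // => m' hm'.
by rewrite mcoeff0 /ser_of_poly (mcoeff_expr_eq0 w0).
Qed.

End Geometric.

Lemma loc_ideal_sub_ps (lt : rel 'X_{1..n}) (I : {mpoly R[n]} -> Prop) g :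
  loc_ideal lt I g -> ps_ideal I g.
Proof.
case=> u [f [[u0 _ _] If ug]].
have w0 : (1 - u)@_0%MM = 0.
  by rewrite mcoeffB mcoeff1 eqxx -[u@__]/(ser_of_poly u 0%MM) u0 subrr.
have -> : g = ser_mul (ser_geom (1 - u)) (ser_of_poly f).
  by rewrite -ug -{1}(ser_geom_mulK w0 g) subKr.
exists [:: (ser_geom (1 - u), f)]; split=> [y [<-|[]] //|].
by apply: functional_extensionality => m /=; rewrite /ser_add /ser0 addr0.
Qed.

Lemma in_S1 (lt : rel 'X_{1..n}) : in_S lt (1 : {mpoly R[n]}).
Proof.
split; [by rewrite /ser_of_poly mcoeff1 eqxx | exact: oner_neq0 |].
move=> m; rewrite /ser_of_poly mcoeff1.
by have [->|_] := eqVneq m 0%MM; [left | rewrite eqxx].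
Qed.

Lemma loc_ideal_poly (lt : rel 'X_{1..n}) (I : {mpoly R[n]} -> Prop) p :
  I p -> loc_ideal lt I (ser_of_poly p).
Proof.
move=> Ip; exists 1, p; split=> //; first exact: in_S1.
apply: functional_extensionality => m.
by rewrite (@ser_mul_agree (mdeg m) _ _ 1 p) ?mul1r.
Qed.

Lemma ps_ideal_agree (I : {mpoly R[n]} -> Prop) f d :
  is_ideal I -> ps_ideal I f -> exists p, I p /\ ser_agree d f p.
Proof.
case=> I0 ID IM [s [sI ->]]; elim: s sI => [|[h q] s IH] sI /=.
  by exists 0; split=> // m _; rewrite mcoeff0.
have [p [Ip fp]] := IH (fun y hy => sI y (or_intror hy)).
have Iq : I q by apply: (sI (h, q)); left.
exists (ser_trunc d h * q + p); split; first by apply: ID => //; apply: IM.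
move=> m hm; rewrite /ser_add mcoeffD fp //.
by rewrite (ser_mul_agree (@ser_trunc_agree d h) (@ser_agree_poly d q)).
Qed.

End Truncation.

Section LeadingTerms.
Variables (R : comNzRingType) (n : nat) (lt : rel 'X_{1..n}).
Hypothesis hlt : local_degree_ordering lt.

Lemma lt_irr a : ~~ lt a a.
Proof. by case: hlt => [[[irr _ _ _] _] _]. Qed.

Lemma lt_trans a b c : lt a b -> lt b c -> lt a c.
Proof. by case: hlt => [[[_ trans _ _] _] _]; apply: trans. Qed.

Lemma lt_total a b : a != b -> lt a b || lt b a.
Proof. by case: hlt => [[[_ _ total _] _] _]; apply: total. Qed.

Lemma lt_mdeg_gt a b : (mdeg b < mdeg a)%N -> lt a b.
Proof.
move=> hab; have /lt_total/orP[//|] : a != b by apply: contraTneq hab => ->; rewrite ltnn.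
by case: hlt => _ deg /deg; rewrite leqNgt hab.
Qed.

Lemma exists_lt_max (s : seq 'X_{1..n}) a :
  exists2 x, x \in a :: s & forall y, y \in a :: s -> y = x \/ lt y x.
Proof.
elim: s a => [|b s IH] a.
  by exists a => [|y]; rewrite ?inE // => /eqP ->; left.
have [x xin xmax] := IH b.
have [->|/lt_total/orP[ax|xa]] := eqVneq a x.
- exists x; first by rewrite inE xin orbT.
  by move=> y; rewrite inE => /orP [/eqP ->|/xmax]; [left|].
- exists x; first by rewrite inE xin orbT.
  by move=> y; rewrite inE => /orP [/eqP ->|/xmax]; [right|].
- exists a; first by rewrite inE eqxx.
  move=> y; rewrite inE => /orP [/eqP ->|/xmax [->|yx]]; [left|right|right] => //.
  exact: lt_trans yx xa.
Qed.

(* A monomial above m0 in the support has degree at most mdeg m0, so LT(f) is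
   the maximum of a finite list. *)
Lemma is_LT_exists (f : series R n) : ser_nz f -> exists c m, is_LT lt f c m.
Proof.
case=> m0 fm0; set d := mdeg m0.
pose s := [seq m <- map val (enum (predT : pred 'X_{1..n < d.+1})) | f m != 0].
have in_s m : f m != 0 -> (mdeg m <= d)%N -> m \in s.
  move=> fm hm; rewrite mem_filter fm /=.
  have hb : (mdeg m < d.+1)%N by [].
  by apply/mapP; exists (BMultinom hb); rewrite ?mem_enum.
have [x xs xmax] : exists2 x, x \in s & forall y, y \in s -> y = x \/ lt y x.
  move: (in_s m0 fm0 (leqnn d)); clear in_s.
  by case: s => [//|a s'] _; apply: exists_lt_max.
move: xs; rewrite mem_filter => /andP [fx /mapP [k _ xk]].
have xd : (mdeg x <= d)%N by rewrite xk -ltnS bmdeg.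
exists (f x), x; split=> // m fm.
have [md|dm] := leqP (mdeg m) d; first by apply/xmax/in_s.
by right; apply: lt_mdeg_gt; apply: leq_ltn_trans xd dm.
Qed.

Lemma is_LT_uniq (f : series R n) c m c' m' :
  is_LT lt f c m -> is_LT lt f c' m' -> c = c' /\ m = m'.
Proof.
move=> [fm c0 hm] [fm' c'0 hm'].
have em : m = m'.
  have [//|mm'] : m = m' \/ lt m m' by apply: hm'; rewrite fm.
  have [//|m'm] : m' = m \/ lt m' m by apply: hm; rewrite fm'.
  by move: (lt_irr m); rewrite (lt_trans mm' m'm).
by subst m'; rewrite -fm -fm'.
Qed.

(* A degree ordering puts every monomial of larger degree below LT(f), so
   agreement up to the degree of LT(f) preserves the leading term. *)
Lemma is_LT_agree (f : series R n) p c m :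
  is_LT lt f c m -> ser_agree (mdeg m) f p -> is_LT lt (ser_of_poly p) c m.
Proof.
move=> [fm c0 hm] fp; split=> //; first by rewrite /ser_of_poly -fp.
move=> m' pm'; have [le_m'm|lt_mm'] := leqP (mdeg m') (mdeg m).
  by apply: hm; rewrite fp.
by right; apply: lt_mdeg_gt.
Qed.

Variable I : {mpoly R[n]} -> Prop.
Hypothesis hI : is_ideal I.

Lemma leading_terms_ps_loc c m :
  (exists f, ps_ideal I f /\ is_LT lt f c m) <->
  (exists f, loc_ideal lt I f /\ is_LT lt f c m).
Proof.
split=> [[f [If LTf]]|[f [Jf LTf]]]; last first.
  by exists f; split=> //; apply: loc_ideal_sub_ps Jf.
have [p [Ip fp]] := ps_ideal_agree (mdeg m) hI If.
by exists (ser_of_poly p); split; [apply: loc_ideal_poly | apply: is_LT_agree fp].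
Qed.

Lemma L_of_set_ps_loc p :
  L_of_set lt (ps_ideal I) p <-> L_of_set lt (loc_ideal lt I) p.
Proof.
split; apply: ideal_gen_sub => _ [f [c [m [Jf LTf ->]]]].
- have [g [Jg LTg]] : exists g, loc_ideal lt I g /\ is_LT lt g c m.
    by apply/leading_terms_ps_loc; exists f.
  by exists g, c, m.
- have [g [Jg LTg]] : exists g, ps_ideal I g /\ is_LT lt g c m.
    by apply/leading_terms_ps_loc; exists f.
  by exists g, c, m.
Qed.

Lemma standard_basis_ps G :
  standard_basis lt (loc_ideal lt I) G -> standard_basis lt (ps_ideal I) G.
Proof.
case=> GJ LG; split=> [g /GJ|p]; first exact: loc_ideal_sub_ps.
by rewrite LG L_of_set_ps_loc.
Qed.

Lemma strong_standard_basis_ps G :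
  strong_standard_basis lt (loc_ideal lt I) G ->
  strong_standard_basis lt (ps_ideal I) G.
Proof.
case=> GJ divG; split=> [g /GJ|f If f_nz]; first exact: loc_ideal_sub_ps.
have [c [m LTf]] := is_LT_exists f_nz.
have [h [Jh LTh]] : exists h, loc_ideal lt I h /\ is_LT lt h c m.
  by apply/leading_terms_ps_loc; exists f.
have h_nz : ser_nz h by exists m; case: LTh => -> ->.
have [g [cf [mf [cg [mg [Gg LTh' LTg dvd]]]]]] := divG h Jh h_nz.
have [ec em] := is_LT_uniq LTh LTh'; subst cf mf.
by exists g, c, m, cg, mg.
Qed.

End LeadingTerms.

Theorem proposition7p1 (R : comNzRingType) (n : nat)
    (hN : noetherian R) (hLES : lin_eq_solvable R)
    (lt : rel 'X_{1..n}) (hlt : local_degree_ordering lt)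
    (I : {mpoly R[n]} -> Prop) (hI : is_ideal I)
    (G : seq (series R n)) :
  (standard_basis lt (loc_ideal lt I) G ->
     standard_basis lt (ps_ideal I) G) /\
  (strong_standard_basis lt (loc_ideal lt I) G ->
     strong_standard_basis lt (ps_ideal I) G).
Proof.
by split; [apply: standard_basis_ps | apply: strong_standard_basis_ps].
Qed.
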